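(* On $\mathrm{Stem}_T^2(D,A\otimes\mathbb R^{2^\tau})$ one has $\Delta_T=\partial_T\overline\partial_T=\overline\partial_T\partial_T$.
   Context: $A$ is a finite-dimensional associative real algebra with unit and $*$-involution; $V\subseteq A$ has a basis $(v_0=1,v_1,\dots,v_N)$ with $v_s$ ($s\ge1$) satisfying $v_s^2=-1$ and pairwise anticommuting; $\mathbb R_{0,t_0}=\mathrm{Span}_{\mathbb R}(v_0,\dots,v_{t_0})$. $T=(t_0,\dots,t_\tau)$ with $0\le t_0<\dots<t_\tau=N$. $\mathscr P(\tau)$ is the power set of $\{1,\dots,\tau\}$; $\overline\beta^h$ is $\beta\in\mathbb R^\tau$ with $\beta_h$ replaced by $-\beta_h$. $D\subseteq\mathbb R_{0,t_0}\times\mathbb R^\tau$ is open and invariant under $(\alpha,\beta)\mapsto(\alpha,\overline\beta^h)$. A $T$-stem function is $F=\sum_KE_KF_K:D\to A\otimes\mathbb R^{2^\tau}$ with $F_K(\alpha,\overline\beta^h)=F_K(\alpha,\beta)$ if $h\notin K$ and $=-F_K(\alpha,\beta)$ if $h\in K$; $\mathrm{Stem}^p_T(D,A\otimes\mathbb R^{2^\tau})$ consists of those with $C^p$ components. Writing $\alpha=\sum_{s=0}^{t_0}x_sv_s$, $\partial_{\alpha_s}$, $\partial_{\beta_h}$ are partial derivatives in $x_s$, $\beta_h$; $\overline\partial_\alpha=\partial_{\alpha_0}+\sum_{s=1}^{t_0}v_s\partial_{\alpha_s}$, $\partial_\alpha=\partial_{\alpha_0}-\sum_{s=1}^{t_0}v_s\partial_{\alpha_s}$,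 $\overline\partial^u_\alpha=\partial_{\alpha_0}-(-1)^u\sum_{s=1}^{t_0}v_s\partial_{\alpha_s}$ for $u\in\mathbb N$. $\sigma(h,K)\in\{0,1\}$ is the parity of the number of elements of $K$ that are $\le h$. The operators are: $(\overline\partial_TF)_K=\overline\partial_\alpha^{|K|+1}F_K+\sum_{h=1}^\tau(-1)^{\sigma(h,K)+1}\partial_{\beta_h}F_{K\triangle\{h\}}$, $(\partial_TF)_K=\overline\partial_\alpha^{|K|}F_K+\sum_{h=1}^\tau(-1)^{\sigma(h,K)}\partial_{\beta_h}F_{K\triangle\{h\}}$, $(\Delta_TF)_K=\partial_\alpha\overline\partial_\alpha F_K+\sum_{h=1}^\tau\partial_{\beta_h}^2F_K$; they map $T$-stem functions to $T$-stem functions. *)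

From HB Require Import structures.
From mathcomp Require Import all_boot all_order all_algebra falgebra.
From mathcomp Require Import all_classical all_reals all_analysis.
Set Implicit Arguments. Unset Strict Implicit. Unset Printing Implicit Defensive.
Import Order.TTheory GRing.Theory Num.Theory.
Import numFieldTopology.Exports numFieldNormedType.Exports.
Local Open Scope classical_set_scope.
Local Open Scope ring_scope.

(* Points of R_{0,t0} x R^tau: alpha = sum_s x_s v_s is encoded by its real
   coordinates x = (x_0,...,x_t0), beta = (beta_1,...,beta_tau).         *)
Notation pt R t0 tau := ('rV[R]_(t0.+1) * 'rV[R]_tau)%type.

Section StemDefs.
Variable R : realType.

(* Real coordinates of A are taken in the basis vbasis fullv
   (coordA / ofcoordA below); C^p and partial derivatives of A-valued
   functions are defined through these real components.                  *)

Definition is_star_involution (A : falgType R) (star : A -> A) : Prop :=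
  [/\ forall (a : R) (x y : A), star (a *: x + y) = a *: star x + star y,
      forall x y : A, star (x * y) = star y * star x
    & forall x : A, star (star x) = x].

Definition clifford_basis (A : falgType R) (N : nat) (v : nat -> A) : Prop :=
  [/\ v 0%N = 1,
      free [seq v i | i <- iota 0 N.+1],
      forall s : nat, (1 <= s <= N)%N -> v s * v s = -1
    & forall s r : nat, (1 <= s <= N)%N -> (1 <= r <= N)%N -> s != r ->
        v s * v r = - (v r * v s)].

Definition T_sequence (tau N : nat) (t : 'I_tau.+1 -> nat) : Prop :=
  (forall i j : 'I_tau.+1, (i < j)%N -> (t i < t j)%N) /\ t ord_max = N.


(* beta with beta_h replaced by - beta_h  (h : 'I_tau encodes h+1). *)
Definition flipb (tau : nat) (h : 'I_tau) (b : 'rV[R]_tau) : 'rV[R]_tau :=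
  \row_j (if j == h then - b 0 j else b 0 j).

Definition flip_invariant (t0 tau : nat) (D : set (pt R t0 tau)) : Prop :=
  forall (h : 'I_tau) (p : pt R t0 tau), D p -> D (p.1, flipb h p.2).

Definition dirA (t0 tau : nat) (s : 'I_t0.+1) : pt R t0 tau :=
  (delta_mx 0 s, 0).
Definition dirB (t0 tau : nat) (h : 'I_tau) : pt R t0 tau :=
  (0, delta_mx 0 h).
Definition cdir (t0 tau : nat) (i : 'I_t0.+1 + 'I_tau) : pt R t0 tau :=
  match i with inl s => dirA tau s | inr h => dirB t0 h end.

Definition lineR (t0 tau : nat) (W : Type) (g : pt R t0 tau -> W)
  (p d : pt R t0 tau) : R -> W :=
  fun r => g (p.1 + r *: d.1, p.2 + r *: d.2).

Definition pdV (t0 tau : nat) (W : normedModType R) (d : pt R t0 tau)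
  (g : pt R t0 tau -> W) : pt R t0 tau -> W :=
  fun p => 'D_1 (lineR g p d) 0.

Definition C2_on (t0 tau : nat) (W : normedModType R) (D : set (pt R t0 tau))
  (g : pt R t0 tau -> W) : Prop :=
  forall p, D p ->
  [/\ {for p, continuous g},
      forall i, derivable (lineR g p (cdir i)) 0 1 /\
                {for p, continuous (pdV (cdir i) g)}
    & forall i j, derivable (lineR (pdV (cdir i) g) p (cdir j)) 0 1 /\
                {for p, continuous (pdV (cdir j) (pdV (cdir i) g))}].

Variable A : falgType R.

Definition coordA (x : A) : 'rV[R]_(\dim {:A}) := passmx.rVof (vbasis fullv) x.
Definition ofcoordA (r : 'rV[R]_(\dim {:A})) : A := passmx.vecof (vbasis fullv) r.

Definition C2_onA (t0 tau : nat) (D : set (pt R t0 tau)) (f : pt R t0 tau -> A)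
  : Prop := C2_on D (fun p => coordA (f p)).

Definition pdA (t0 tau : nat) (d : pt R t0 tau) (f : pt R t0 tau -> A)
  : pt R t0 tau -> A :=
  fun p => ofcoordA (pdV d (fun q => coordA (f q)) p).

Definition d_alpha_s (t0 tau : nat) (s : 'I_t0.+1) (f : pt R t0 tau -> A) :=
  pdA (dirA tau s) f.
Definition d_beta_h (t0 tau : nat) (h : 'I_tau) (f : pt R t0 tau -> A) :=
  pdA (dirB t0 h) f.

Variable v : nat -> A.

Definition dbar_u (t0 tau : nat) (u : nat) (f : pt R t0 tau -> A) :
  pt R t0 tau -> A :=
  fun p => d_alpha_s ord0 f p -
    (-1) ^+ u * \sum_(s < t0.+1 | (0 < s)%N) v s * d_alpha_s s f p.

Definition dbar_alpha (t0 tau : nat) (f : pt R t0 tau -> A) := dbar_u 1 f.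
Definition d_alpha (t0 tau : nat) (f : pt R t0 tau -> A) := dbar_u 0 f.

(* A T-stem function F = sum_K E_K F_K is encoded by the family (F_K)_K,
   K ranging over subsets of {1..tau} (encoded as {set 'I_tau}). *)
Definition stemfam (t0 tau : nat) := {set 'I_tau} -> pt R t0 tau -> A.

Definition is_stem (t0 tau : nat) (D : set (pt R t0 tau)) (F : stemfam t0 tau)
  : Prop :=
  forall (K : {set 'I_tau}) (h : 'I_tau) (p : pt R t0 tau), D p ->
    F K (p.1, flipb h p.2) = (if h \in K then - F K p else F K p).

Definition sigma (tau : nat) (h : 'I_tau) (K : {set 'I_tau}) : nat :=
  odd #|[set k in K | (k <= h)%N]|.

Definition symdiff1 (tau : nat) (K : {set 'I_tau}) (h : 'I_tau) :=
  (K :\: [set h]) :|: ([set h] :\: K).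

Definition dbarT (t0 tau : nat) (F : stemfam t0 tau) : stemfam t0 tau :=
  fun K p => dbar_u #|K|.+1 (F K) p +
    \sum_(h < tau) (-1) ^+ (sigma h K + 1) *: d_beta_h h (F (symdiff1 K h)) p.

Definition dT (t0 tau : nat) (F : stemfam t0 tau) : stemfam t0 tau :=
  fun K p => dbar_u #|K| (F K) p +
    \sum_(h < tau) (-1) ^+ (sigma h K) *: d_beta_h h (F (symdiff1 K h)) p.

Definition LapT (t0 tau : nat) (F : stemfam t0 tau) : stemfam t0 tau :=
  fun K p => d_alpha (dbar_alpha (F K)) p +
    \sum_(h < tau) d_beta_h h (d_beta_h h (F K)) p.

End StemDefs.

(* The three kinds of second-order terms of [dT (dbarT F)] and [dbarT (dT F)]
   are handled separately, after commuting partial derivatives by Schwarz's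
   theorem (obtained from the mean value theorem on the plane spanned by two
   coordinate directions).
   - alpha-alpha: [dbar^u' dbar^u] with [u + u'] odd is [d_alpha dbar_alpha]:
     the first-order cross terms carry opposite signs and cancel.
   - alpha-beta: passing from [K] to [K (+) {h}] flips the parity of [|K|], so
     these terms cancel in pairs.
   - beta-beta: [sigma(h, K (+) {k}) + sigma(k, K (+) {h}) - sigma(h, K) - sigma(k, K)]
     is odd for [h <> k], so the off-diagonal terms cancel and the diagonal
     leaves [sum_h d_beta_h^2]. *)

From HB Require Import structures.
From mathcomp Require Import all_boot all_order all_algebra falgebra.
From mathcomp Require Import all_classical all_reals all_analysis.
From mathcomp Require Import ring lra.
Import Order.TTheory GRing.Theory Num.Theory.
Import numFieldTopology.Exports numFieldNormedType.Exports.
Local Open Scope classical_set_scope.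
Local Open Scope ring_scope.
Set Implicit Arguments. Unset Strict Implicit.

Section SchwarzReal.
Variable R : realType.

Lemma MVT_from0 (f df : R -> R) (s : R) :
  (forall x : R, `|x| <= `|s| -> is_derive x 1 f (df x)) ->
  exists2 c, `|c| <= `|s| & f s - f 0 = df c * s.
Proof.
move=> f'.
have MVT_in a b : a <= b -> (forall x, x \in `[a, b] -> `|x| <= `|s|) ->
    exists2 c, `|c| <= `|s| & f b - f a = df c * (b - a).
  move=> ab in_s.
  have [c /in_s cs E] := MVT_segment ab
    (fun x xs => f' x (in_s x (subset_itv_oo_cc xs)))
    (derivable_within_continuous
      (fun x xs => @ex_derive _ _ _ _ _ _ _ (f' x (in_s x xs)))).
  by exists c.
have [s0|s0] := leP 0 s.
- have [|c cs E] := MVT_in 0 s s0; last by exists c; rewrite // E subr0.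
  by move=> x; rewrite in_itv /= => /andP[x0 xs]; rewrite !ger0_norm //; lra.
- have [|c cs E] := MVT_in s 0 (ltW s0); last by exists c; rewrite // -opprB E; ring.
  by move=> x; rewrite in_itv /= => /andP[sx x0]; rewrite !ler0_norm //; lra.
Qed.

Lemma derive_quotient_cvg (f : R -> R) (l : R) :
  is_derive 0 (1 : R) f l -> (fun h => h^-1 * (f h - f 0)) @ 0^' --> l.
Proof.
move=> [df <-]; suff -> : (fun h => h^-1 * (f h - f 0)) =
    (fun h => h^-1 *: ((f \o shift 0) (h *: 1) - f 0)) by exact: df.
by apply/funext => h; rewrite /= addr0 [h *: 1]mulr1.
Qed.

Variables (Phi Phi1 Phi12 : R -> R -> R) (Psi : R -> R) (delta : R).
Hypothesis delta_gt0 : 0 < delta.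
Hypothesis Phi_d1 : forall s t, `|s| < delta -> `|t| < delta ->
  is_derive s (1 : R) (Phi ^~ t) (Phi1 s t).
Hypothesis Phi1_d2 : forall s t, `|s| < delta -> `|t| < delta ->
  is_derive t (1 : R) (Phi1 s) (Phi12 s t).

Lemma second_difference_MVT s t : `|s| < delta -> `|t| < delta ->
  exists2 st : R * R, `|st.1| <= `|s| /\ `|st.2| <= `|t| &
    (Phi s t - Phi s 0) - (Phi 0 t - Phi 0 0) = Phi12 st.1 st.2 * t * s.
Proof.
move=> sd td; have zd : `|0 : R| < delta by rewrite normr0 (le_lt_trans _ sd).
have [a /[dup] as_ /le_lt_trans/(_ sd) ad Ea] :=
  @MVT_from0 (fun r => Phi r t - Phi r 0) (fun r => Phi1 r t - Phi1 r 0) s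
  (fun x xs => is_deriveB (Phi_d1 (le_lt_trans xs sd) td)
                          (Phi_d1 (le_lt_trans xs sd) zd)).
have [b bt Eb] := @MVT_from0 (Phi1 a) (Phi12 a) t
  (fun x xt => Phi1_d2 ad (le_lt_trans xt td)).
by exists (a, b); rewrite /= ?Ea ?Eb.
Qed.

Hypothesis Phi_d2 : forall s, `|s| < delta -> is_derive 0 (1 : R) (Phi s) (Psi s).
Hypothesis Phi12_cont : forall e, 0 < e -> exists2 eta, 0 < eta &
  forall s t, `|s| < eta -> `|t| < eta -> `|Phi12 s t - Phi12 0 0| <= e.

Lemma Psi_increment e : 0 < e -> exists2 eta, 0 < eta &
  forall s, `|s| < eta -> `|Psi s - Psi 0 - Phi12 0 0 * s| <= e * `|s|.
Proof.
move=> e0; have [eta0 eta0_gt0 near0] := Phi12_cont e0.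
exists (Num.min eta0 delta) => [|s]; first by rewrite lt_min eta0_gt0.
rewrite lt_min => /andP[s_eta0 sd].
have zd : `|0 : R| < delta by rewrite normr0.
pose Q t := t^-1 * ((Phi s t - Phi s 0) - (Phi 0 t - Phi 0 0)).
have QE : Q @ 0^' --> Psi s - Psi 0.
  apply: cvg_trans
    (cvgB (derive_quotient_cvg (Phi_d2 sd)) (derive_quotient_cvg (Phi_d2 zd))).
  by apply: near_eq_cvg; near=> t; rewrite /Q mulrBr.
apply: (cvgr_to_le (cvg_norm (cvgB QE (cvg_cst (Phi12 0 0 * s))))).
near=> t.
have t0 : t != 0 by near: t; exact: nbhs_dnbhs_neq.
have [tl td] : `|t| < eta0 /\ `|t| < delta.
  by apply/andP; rewrite -lt_min; near: t; apply: dnbhs0_lt; rewrite lt_min eta0_gt0.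
have [[a b] /= [/le_lt_trans as_ /le_lt_trans bt] E] := second_difference_MVT sd td.
rewrite /Q !fctE E mulrAC [_ * t]mulrC mulKf // -mulrBl normrM ler_wpM2r //.
by apply: near0; [exact: as_ | exact: bt].
Unshelve. all: by end_near.
Qed.

Lemma schwarz_real : 'D_1 Psi 0 = Phi12 0 0.
Proof.
apply/cvg_lim => //; apply/cvgrPdist_le => e e0.
have [eta eta_gt0 incr] := Psi_increment e0.
near=> h.
have h0 : h != 0 by near: h; exact: nbhs_dnbhs_neq.
rewrite /= addr0 [h *: 1]mulr1 -[Phi12 0 0](mulKf h0) -mulrBr normrM normfV.
rewrite ler_pdivrMl ?normr_gt0 // -normrN opprB (mulrC h) [`|h| * e]mulrC.
by apply: incr; near: h; exact: dnbhs0_lt.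
Unshelve. all: by end_near.
Qed.

End SchwarzReal.

Lemma near0_affine2 (R : realType) (V : normedModType R) (x a b : V) (e : R) :
  0 < e -> exists2 eta : R, 0 < eta & forall s t : R,
    `|s| < eta -> `|t| < eta -> ball x e (x + s *: a + t *: b).
Proof.
move=> e0; pose M := `|a| + `|b| + 1.
have M0 : 0 < M by rewrite ltr_wpDl // addr_ge0.
exists (e / M) => [|s t se te]; first by rewrite divr_gt0.
rewrite -ball_normE /= -addrA opprD addrA subrr sub0r normrN.
apply: le_lt_trans (ler_normD _ _) _; rewrite !normrZ.
apply: (@le_lt_trans _ _ (e / M * (`|a| + `|b|))).
  by rewrite mulrDr lerD // ler_wpM2r // ltW.
rewrite -[ltRHS](divfK (lt0r_neq0 M0)) ltr_pM2l ?divr_gt0 //.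
by rewrite /M ltrDl.
Qed.

Lemma is_derive_shifted (R : realType) (W : normedModType R) (f : R -> W) s :
  derivable (fun r => f (s + r)) 0 1 ->
  is_derive s (1 : R) f ('D_1 (fun r => f (s + r)) 0).
Proof.
have E : (fun h : R => h^-1 *: (((fun r => f (s + r)) \o shift 0) (h *: 1) - f (s + 0)))
       = (fun h : R => h^-1 *: ((f \o shift s) (h *: 1) - f s)).
  by apply/funext => h; rewrite /= !addr0 [s + _]addrC.
by rewrite /derivable E => df; split; rewrite // /derive E.
Qed.

Lemma is_derive_mx_entry (R : realType) n (G : R -> 'rV[R]_n) s dG c :
  is_derive s (1 : R) G dG -> is_derive s (1 : R) (fun r => G r 0 c) (dG 0 c).
Proof.
move=> [dG_ex <-]; split; first by move/derivable_mxP : dG_ex; apply.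
by rewrite derive_mx // mxE.
Qed.

Section PlaneSchwarz.
Variables (R : realType) (t0 tau : nat).
Local Notation PT := (pt R t0 tau).

Definition plane (p d1 d2 : PT) (s t : R) : PT :=
  (p.1 + s *: d1.1 + t *: d2.1, p.2 + s *: d1.2 + t *: d2.2).

Lemma plane00 p d1 d2 : plane p d1 d2 0 0 = p.
Proof. by rewrite /plane !scale0r !addr0; case: p. Qed.

Lemma lineR_plane1 (W : Type) (g : PT -> W) p d1 d2 s t :
  lineR g (plane p d1 d2 s t) d1 = fun r => g (plane p d1 d2 (s + r) t).
Proof.
by apply/funext => r; rewrite /lineR /plane /= !scalerDl !addrA !(addrAC _ (t *: _)).
Qed.

Lemma lineR_plane2 (W : Type) (g : PT -> W) p d1 d2 s t :
  lineR g (plane p d1 d2 s t) d2 = fun r => g (plane p d1 d2 s (t + r)).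
Proof. by apply/funext => r; rewrite /lineR /plane /= !scalerDl !addrA. Qed.

Lemma plane_near (p d1 d2 : PT) (e : R) : 0 < e ->
  exists2 eta : R, 0 < eta & forall s t : R, `|s| < eta -> `|t| < eta ->
    ball p e (plane p d1 d2 s t).
Proof.
move=> e0; have [eta1 eta1_gt0 near1] := near0_affine2 p.1 d1.1 d2.1 e0.
have [eta2 eta2_gt0 near2] := near0_affine2 p.2 d1.2 d2.2 e0.
exists (Num.min eta1 eta2) => [|s t]; first by rewrite lt_min eta1_gt0.
rewrite !lt_min => /andP[s1 s2] /andP[t1 t2]; split; [exact: near1 | exact: near2].
Qed.

Lemma open_plane (D : set PT) p d1 d2 : open D -> D p ->
  exists2 delta : R, 0 < delta & forall s t : R, `|s| < delta -> `|t| < delta ->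
    D (plane p d1 d2 s t).
Proof.
move=> Dop Dp; have /nbhs_ballP[e e0 pe] : nbhs p D by exact: open_nbhs_nbhs.
have [eta eta0 near_p] := plane_near p d1 d2 e0.
by exists eta => // s t *; apply/pe/near_p.
Qed.

Lemma continuous_plane (W : normedModType R) (G : PT -> W) p d1 d2 :
  {for p, continuous G} -> forall e : R, 0 < e ->
  exists2 eta : R, 0 < eta & forall s t : R, `|s| < eta -> `|t| < eta ->
    `|G (plane p d1 d2 s t) - G p| <= e.
Proof.
move=> /cvgrPdist_le Gc e /Gc /nbhs_ballP[r r0 Gr].
have [eta eta0 near_p] := plane_near p d1 d2 r0.
by exists eta => // s t sr tr; rewrite distrC; apply/Gr/near_p.
Qed.

Lemma is_derive_plane1 n (g : PT -> 'rV[R]_n) p d1 d2 s t c :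
  derivable (lineR g (plane p d1 d2 s t) d1) 0 1 ->
  is_derive s (1 : R) (fun r => g (plane p d1 d2 r t) 0 c)
    (pdV d1 g (plane p d1 d2 s t) 0 c).
Proof.
by rewrite /pdV lineR_plane1 => dg; apply/is_derive_mx_entry/is_derive_shifted.
Qed.

Lemma is_derive_plane2 n (g : PT -> 'rV[R]_n) p d1 d2 s t c :
  derivable (lineR g (plane p d1 d2 s t) d2) 0 1 ->
  is_derive t (1 : R) (fun r => g (plane p d1 d2 s r) 0 c)
    (pdV d2 g (plane p d1 d2 s t) 0 c).
Proof.
by rewrite /pdV lineR_plane2 => dg; apply/is_derive_mx_entry/is_derive_shifted.
Qed.

Lemma pdV_comm_at n (D : set PT) (g : PT -> 'rV[R]_n) p d1 d2 :
  open D -> D p ->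
  (forall q, D q -> derivable (lineR g q d1) 0 1) ->
  (forall q, D q -> derivable (lineR g q d2) 0 1) ->
  (forall q, D q -> derivable (lineR (pdV d1 g) q d2) 0 1) ->
  derivable (lineR (pdV d2 g) p d1) 0 1 ->
  {for p, continuous (pdV d2 (pdV d1 g))} ->
  pdV d2 (pdV d1 g) p = pdV d1 (pdV d2 g) p.
Proof.
move=> Dop Dp dg1 dg2 dg12 dg21 g12c; pose P := plane p d1 d2.
have [delta delta0 DP] := open_plane d1 d2 Dop Dp.
have zd : `|0 : R| < delta by rewrite normr0.
apply/rowP => c.
rewrite -(plane00 p d1 d2) in dg21.
have [_ E1] := is_derive_plane1 c dg21.
have E2 : 'D_1 (fun s => pdV d2 g (P s 0) 0 c) 0 = pdV d2 (pdV d1 g) (P 0 0) 0 c.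
  apply: (@schwarz_real R (fun s t => g (P s t) 0 c) (fun s t => pdV d1 g (P s t) 0 c)
    (fun s t => pdV d2 (pdV d1 g) (P s t) 0 c) _ delta delta0).
  - by move=> s t sd td; exact: is_derive_plane1 (dg1 _ (DP s t sd td)).
  - by move=> s t sd td; exact: is_derive_plane2 (dg12 _ (DP s t sd td)).
  - by move=> s sd; exact: is_derive_plane2 (dg2 _ (DP s 0 sd zd)).
  - move=> e e0; rewrite /P plane00.
    apply: (continuous_plane (G := fun q => pdV d2 (pdV d1 g) q 0 c)) => //.
    exact: (continuous_comp g12c (@coord_continuous _ _ _ 0 c _)).
rewrite /P plane00 in E1 E2.
exact: etrans (esym E2) E1.
Qed.

Lemma pdV_comm n (D : set PT) (g : PT -> 'rV[R]_n) p i j :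
  open D -> C2_on D g -> D p ->
  pdV (cdir R j) (pdV (cdir R i) g) p = pdV (cdir R i) (pdV (cdir R j) g) p.
Proof.
move=> Dop g2 Dp; apply: (pdV_comm_at Dop Dp).
- by move=> q /g2[_ /(_ i)[]].
- by move=> q /g2[_ /(_ j)[]].
- by move=> q /g2[_ _ /(_ i j)[]].
- by have [_ _ /(_ j i)[]] := g2 p Dp.
- by have [_ _ /(_ i j)[]] := g2 p Dp.
Qed.

End PlaneSchwarz.

Lemma linear_rV_continuous (R : realType) n m (L : {linear 'rV[R]_n -> 'rV[R]_m}) :
  continuous L.
Proof.
have -> : (L : _ -> _) = \sum_(i < n) (fun r : 'rV[R]_n => r 0 i *: L 'e_i).
  apply/funext => r; rewrite [in LHS](row_sum_delta r) linear_sum fct_sumE.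
  by apply: eq_bigr => i _; rewrite linearZ.
move=> x; apply: differentiable_continuous; apply: differentiable_sum => i.
exact/differentiableZl/differentiable_coord.
Qed.

Lemma is_derive_linear (R : realType) (V : normedModType R) n m
    (L : {linear 'rV[R]_n -> 'rV[R]_m}) (G : V -> 'rV[R]_n) x v dG :
  is_derive x v G dG -> is_derive x v (L \o G) (L dG).
Proof.
move=> [dG_ex <-].
have E : (fun h : R => h^-1 *: ((L \o G \o shift x) (h *: v) - (L \o G) x)) =
         L \o (fun h : R => h^-1 *: ((G \o shift x) (h *: v) - G x)).
  by apply/funext => h /=; rewrite -linearB -linearZ.
have LG : (L \o (fun h : R => h^-1 *: ((G \o shift x) (h *: v) - G x))) @ 0^'
    --> L ('D_v G x).
  by apply: continuous_cvg; [exact: linear_rV_continuous | exact: dG_ex].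
split; first by rewrite /derivable E; exact: cvgP LG.
by rewrite /derive E; exact: cvg_lim LG.
Qed.

Section AlgebraValuedPartials.
Variables (R : realType) (A : falgType R) (t0 tau : nat).
Local Notation PT := (pt R t0 tau).

Lemma coordAK : cancel (@coordA R A) (@ofcoordA R A).
Proof. exact: passmx.rVofK (vbasisP fullv). Qed.

Lemma ofcoordAK : cancel (@ofcoordA R A) (@coordA R A).
Proof. exact: passmx.vecofK (vbasisP fullv). Qed.

HB.instance Definition _ := GRing.isLinear.Build R A _ _ (@coordA R A)
  (passmx.rVof_linear _).
HB.instance Definition _ := GRing.isLinear.Build R _ A _ (@ofcoordA R A)
  (passmx.vecof_linear _).

Definition has_pdA (d : PT) (f : PT -> A) (p : PT) (a : A) : Prop :=
  is_derive (0 : R) (1 : R) (lineR (fun q => coordA (f q)) p d) (coordA a).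

Lemma has_pdA_val d f p a : has_pdA d f p a -> pdA d f p = a.
Proof. by move=> [_ E]; rewrite /pdA /pdV E coordAK. Qed.

Lemma has_pdAP d f p :
  derivable (lineR (fun q => coordA (f q)) p d) 0 1 -> has_pdA d f p (pdA d f p).
Proof. by move=> df; split; rewrite // /pdA ofcoordAK. Qed.

Lemma has_pdA_linear (L : {linear A -> A}) d f p a :
  has_pdA d f p a -> has_pdA d (fun q => L (f q)) p (L a).
Proof.
move=> /(is_derive_linear (@coordA R A \o L \o @ofcoordA R A)).
rewrite /= coordAK; congr is_derive.
by apply/funext => r; rewrite /lineR /= coordAK.
Qed.

Lemma has_pdAD d f g p a b : has_pdA d f p a -> has_pdA d g p b ->
  has_pdA d (fun q => f q + g q) p (a + b).
Proof.
move=> df dg; have := is_deriveD df dg; rewrite /has_pdA linearD.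
by congr is_derive; apply/funext => r; rewrite /lineR /= linearD.
Qed.

Lemma has_pdA_sum (I : Type) (r : seq I) (P : pred I) (fs : I -> PT -> A)
    (a : I -> A) d p :
  (forall i, P i -> has_pdA d (fs i) p (a i)) ->
  has_pdA d (fun q => \sum_(i <- r | P i) fs i q) p (\sum_(i <- r | P i) a i).
Proof.
move=> dfs.
have -> : (fun q => \sum_(i <- r | P i) fs i q) = \sum_(i <- r | P i) fs i.
  by rewrite fct_sumE.
apply: (big_rec2 (fun g b => has_pdA d g p b)) => [|i b g Pi dg]; last first.
  exact: has_pdAD (dfs i Pi) dg.
rewrite /has_pdA [coordA 0]linear0.
have := is_derive_cst (0 : 'rV[R]_(\dim {:A})) (0 : R) 1.
by congr is_derive.
Qed.

Lemma coordA_pdA d (f : PT -> A) :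
  (fun q => coordA (pdA d f q)) = pdV d (fun q => coordA (f q)).
Proof. by apply/funext => q; rewrite ofcoordAK. Qed.

Lemma has_pdA_C2 (D : set PT) (f : PT -> A) p i j : C2_onA D f -> D p ->
  has_pdA (cdir R j) (pdA (cdir R i) f) p (pdA (cdir R j) (pdA (cdir R i) f) p).
Proof.
by move=> f2 Dp; apply: has_pdAP; rewrite coordA_pdA; have [_ _ /(_ i j)[]] := f2 p Dp.
Qed.

Lemma pdA_comm (D : set PT) (f : PT -> A) p i j : open D -> C2_onA D f -> D p ->
  pdA (cdir R j) (pdA (cdir R i) f) p = pdA (cdir R i) (pdA (cdir R j) f) p.
Proof.
move=> Dop f2 Dp.
transitivity (ofcoordA (pdV (cdir R j) (pdV (cdir R i) (fun q => coordA (f q))) p)).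
  by rewrite -coordA_pdA.
by rewrite (pdV_comm i j Dop f2 Dp) -coordA_pdA.
Qed.

End AlgebraValuedPartials.

Section SymmetricDifference.
Variable tau : nat.
Implicit Types (K : {set 'I_tau}) (h k x : 'I_tau).

Lemma in_symdiff1 K h x : (x \in symdiff1 K h) = (x \in K) (+) (x == h).
Proof. by rewrite !inE; case: (x \in K); case: (x == h). Qed.

Lemma symdiff1K K h : symdiff1 (symdiff1 K h) h = K.
Proof. by apply/setP => x; rewrite !in_symdiff1 -addbA addbb addbF. Qed.

Lemma symdiff1C K h k : symdiff1 (symdiff1 K h) k = symdiff1 (symdiff1 K k) h.
Proof. by apply/setP => x; rewrite !in_symdiff1 -!addbA [(x == h) (+) _]addbC. Qed.

Lemma odd_card_symdiff1 K h : odd #|symdiff1 K h| = ~~ odd #|K|.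
Proof.
have [hK|hK] := boolP (h \in K).
  have -> : symdiff1 K h = K :\ h.
    by apply/setP => x; rewrite in_symdiff1 !inE; case: eqP => [->|]; rewrite ?hK ?addbF.
  by rewrite (cardsD1 h K) hK add1n /= negbK.
have -> : symdiff1 K h = h |: K.
  apply/setP => x; rewrite in_symdiff1 !inE.
  by case: eqP => [->|]; rewrite ?(negPf hK) ?addbF ?orbF.
by rewrite cardsU1 hK.
Qed.

Lemma odd_sigma_symdiff1 K h k :
  odd (sigma k (symdiff1 K h)) = odd (sigma k K) (+) (h <= k)%N.
Proof.
rewrite /sigma !oddb; case: (leqP h k) => hk.
  have -> : [set x in symdiff1 K h | (x <= k)%N] = symdiff1 [set x in K | (x <= k)%N] h.
    apply/setP => x; rewrite !(in_symdiff1, inE).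
    by case: eqP => [->|]; rewrite ?hk ?andbT // !addbF.
  by rewrite odd_card_symdiff1 addbT.
rewrite addbF; congr odd; apply: eq_card => x; rewrite !(in_symdiff1, inE).
by case: (eqVneq x h) => [->|]; rewrite ?addbF // leqNgt hk !andbF.
Qed.

End SymmetricDifference.

Lemma sign_odd (T : pzRingType) (m n : nat) :
  odd m = odd n -> (-1) ^+ m = (-1) ^+ n :> T.
Proof. by move=> mn; rewrite -signr_odd mn signr_odd. Qed.

Lemma sign_flip (T : pzRingType) (m n : nat) :
  odd m = ~~ odd n -> (-1) ^+ m = - (-1) ^+ n :> T.
Proof. by move=> mn; rewrite -signr_odd mn signrN signr_odd. Qed.

Lemma sum_offdiag_antisym (R : numFieldType) (V : lmodType R) n
    (w : 'I_n -> 'I_n -> V) :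
  (forall h k, h != k -> w k h = - w h k) ->
  \sum_(h < n) \sum_(k < n | k != h) w h k = 0.
Proof.
move=> w_anti; pose w' h k := if k != h then w h k else 0.
have -> : \sum_(h < n) \sum_(k < n | k != h) w h k = \sum_h \sum_k w' h k.
  by apply: eq_bigr => h _; rewrite big_mkcond.
set S := (X in X = 0).
suff SS : S + S = 0.
  have : 2%:R *: S = 0 by rewrite scaler_nat mulr2n.
  by move/eqP; rewrite scaler_eq0 pnatr_eq0 => /eqP.
rewrite {2}/S exchange_big /= -big_split /=; apply: big1 => h _.
rewrite -big_split /=; apply: big1 => k _; rewrite /w' eq_sym.
by case: eqP => [|/eqP hk]; rewrite /= ?addr0 // (w_anti _ _ hk) subrr.
Qed.

Section CliffordSymbol.
Variables (R : realType) (A : falgType R) (v : nat -> A) (t0 : nat).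
Implicit Types (x y : 'I_t0.+1 -> A).

Definition vsum x : A := \sum_(s < t0.+1 | (0 < s)%N) v s * x s.

Definition dbarv (u : nat) x : A := x ord0 - (-1) ^+ u * vsum x.

Lemma eq_dbarv u x y : (forall s, x s = y s) -> dbarv u x = dbarv u y.
Proof. by move=> /funext ->. Qed.

Lemma vsumB x y : vsum (fun s => x s - y s) = vsum x - vsum y.
Proof. by rewrite -sumrB; apply: eq_bigr => s _; rewrite mulrBr. Qed.

Lemma vsum_sign u x : vsum (fun s => (-1) ^+ u * x s) = (-1) ^+ u * vsum x.
Proof. by rewrite mulr_sumr; apply: eq_bigr => s _; rewrite mulrA commr_sign mulrA. Qed.

Lemma dbarvD u x y : dbarv u (fun s => x s + y s) = dbarv u x + dbarv u y.
Proof.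
have vsumD : vsum (fun s => x s + y s) = vsum x + vsum y.
  by rewrite /vsum -big_split; apply: eq_bigr => s _; rewrite mulrDr.
by rewrite /dbarv vsumD mulrDr opprD addrACA.
Qed.

Lemma dbarvZ u k x : dbarv u (fun s => k *: x s) = k *: dbarv u x.
Proof.
have vsumZ : vsum (fun s => k *: x s) = k *: vsum x.
  by rewrite /vsum scaler_sumr; apply: eq_bigr => s _; rewrite scalerAr.
by rewrite /dbarv vsumZ scalerBr scalerAr.
Qed.

Lemma dbarv_sum u (I : Type) (r : seq I) (P : pred I) (x : I -> 'I_t0.+1 -> A) :
  dbarv u (fun s => \sum_(i <- r | P i) x i s) = \sum_(i <- r | P i) dbarv u (x i).
Proof.
have -> : (fun s => \sum_(i <- r | P i) x i s) = \sum_(i <- r | P i) x i.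
  by rewrite fct_sumE.
apply: (big_rec2 (fun y b => dbarv u y = b)) => [|i y b _ <-]; last exact: dbarvD.
by rewrite /dbarv /vsum big1 ?mulr0 ?subr0 // => s _; rewrite mulr0.
Qed.

Lemma dbarv_odd u u' x : odd u = odd u' -> dbarv u x = dbarv u' x.
Proof. by move=> uu'; rewrite /dbarv (sign_odd _ uu'). Qed.

Lemma dbarv_comp u u' (S : 'I_t0.+1 -> 'I_t0.+1 -> A) :
  odd (u + u') -> (forall s, S s ord0 = S ord0 s) ->
  dbarv u' (fun j => dbarv u (fun i => S i j)) =
  S ord0 ord0 - vsum (fun j => vsum (fun i => S i j)).
Proof.
move=> uu' S0; have sign_u' : (-1) ^+ u' = - (-1) ^+ u :> A.
  by apply: sign_flip; move: uu'; rewrite oddD; case: (odd u); case: (odd u').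
rewrite /dbarv sign_u' vsumB vsum_sign.
have -> : vsum (fun i => S i ord0) = vsum (S ord0) by apply: eq_bigr => s _; rewrite S0.
by rewrite mulrBr mulNr mulNr signrMK opprK opprD opprK addrA subrK.
Qed.

End CliffordSymbol.

Section StemSigns.
Variables (R : realType) (A : falgType R) (v : nat -> A) (t0 tau : nat).
Variables (e e' : nat) (K : {set 'I_tau}).
Hypothesis ee' : odd (e + e').

Let odd_e' : odd e' = ~~ odd e.
Proof. by move: ee'; rewrite oddD; case: (odd e); case: (odd e'). Qed.

Lemma mixed_terms_cancel (Sab : {set 'I_tau} -> 'I_t0.+1 -> 'I_tau -> A) :
  dbarv v (#|K| + e')
    (fun j => \sum_(k < tau) ((-1) ^+ (sigma k K + e) : R) *: Sab (symdiff1 K k) j k)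
  + \sum_(h < tau) ((-1) ^+ (sigma h K + e') : R) *:
      dbarv v (#|symdiff1 K h| + e) (fun i => Sab (symdiff1 K h) i h) = 0.
Proof.
rewrite dbarv_sum -big_split /=; apply: big1 => h _.
rewrite dbarvZ (@dbarv_odd _ _ _ _ (#|symdiff1 K h| + e) (#|K| + e')); last first.
  by rewrite !oddD odd_card_symdiff1 odd_e' addNb addbN.
rewrite (@sign_flip _ (sigma h K + e') (sigma h K + e)) ?scaleNr ?subrr //.
by rewrite !oddD odd_e' addbN.
Qed.

Lemma beta_sign h k :
  ((-1) ^+ (sigma h K + e') * (-1) ^+ (sigma k (symdiff1 K h) + e) : R) =
  - (-1) ^+ (sigma h K + sigma k K + (h <= k)%N).
Proof.
rewrite -exprD; apply: sign_flip; rewrite !oddD odd_sigma_symdiff1 odd_e'.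
by case: (odd (sigma h K)); case: (odd (sigma k K)); case: (odd e); case: (h <= k)%N.
Qed.

Lemma beta_terms (Sbb : {set 'I_tau} -> 'I_tau -> 'I_tau -> A) :
  (forall J k h, Sbb J k h = Sbb J h k) ->
  \sum_(h < tau) ((-1) ^+ (sigma h K + e') : R) *:
     \sum_(k < tau) ((-1) ^+ (sigma k (symdiff1 K h) + e) : R) *:
        Sbb (symdiff1 (symdiff1 K h) k) k h
  = \sum_(h < tau) Sbb K h h.
Proof.
move=> Sbb_sym.
pose w h k := ((-1) ^+ (sigma h K + e') * (-1) ^+ (sigma k (symdiff1 K h) + e) : R)
  *: Sbb (symdiff1 (symdiff1 K h) k) k h.
have -> : \sum_(h < tau) ((-1) ^+ (sigma h K + e') : R) *:
     \sum_(k < tau) ((-1) ^+ (sigma k (symdiff1 K h) + e) : R) *: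
        Sbb (symdiff1 (symdiff1 K h) k) k h
  = \sum_(h < tau) (w h h + \sum_(k < tau | k != h) w h k).
  apply: eq_bigr => h _; rewrite scaler_sumr (bigD1 h) //=.
  by congr (_ + _); [|apply: eq_bigr => k _]; rewrite scalerA.
rewrite big_split /= sum_offdiag_antisym ?addr0 => [|h k hk].
  apply: eq_bigr => h _.
  by rewrite /w beta_sign symdiff1K leqnn -signr_odd !oddD addbb expr1 opprK scale1r.
have kh : (k <= h)%N = ~~ (h <= k)%N by rewrite -ltnNge ltn_neqAle val_eqE eq_sym hk.
rewrite /w symdiff1C Sbb_sym !beta_sign -scaleNr opprK; congr (_ *: _).
rewrite (@sign_flip _ (sigma h K + sigma k K + (h <= k)%N)
                     (sigma k K + sigma h K + (k <= h)%N)) // !oddD kh.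
by case: (odd _); case: (odd _); case: (h <= k)%N.
Qed.

End StemSigns.

Section StemOperators.
Variables (R : realType) (A : falgType R) (v : nat -> A) (t0 tau : nat).
Local Notation PT := (pt R t0 tau).

Definition dbarT_u (e : nat) (F : stemfam A t0 tau) : stemfam A t0 tau :=
  fun K p => dbar_u v (#|K| + e) (F K) p +
    \sum_(h < tau) (-1) ^+ (sigma h K + e) *: d_beta_h h (F (symdiff1 K h)) p.

Lemma dT_dbarT_u F : dT v F = dbarT_u 0 F.
Proof.
apply/funext => K; apply/funext => p; rewrite /dT /dbarT_u addn0.
by congr (_ + _); apply: eq_bigr => h _; rewrite addn0.
Qed.

Lemma dbarT_dbarT_u F : dbarT v F = dbarT_u 1 F.
Proof. by apply/funext => K; apply/funext => p; rewrite /dbarT /dbarT_u addn1. Qed.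

Lemma dbarT_uE e (F : stemfam A t0 tau) K p :
  dbarT_u e F K p = dbarv v (#|K| + e) (fun s => d_alpha_s s (F K) p) +
    \sum_(h < tau) (-1) ^+ (sigma h K + e) *: d_beta_h h (F (symdiff1 K h)) p.
Proof. by []. Qed.

Lemma dbar_uE u (f : PT -> A) p :
  dbar_u v u f p = dbarv v u (fun s => d_alpha_s s f p).
Proof. by []. Qed.

Lemma has_pdA_dbar_u d u (f : PT -> A) p (a : 'I_t0.+1 -> A) :
  (forall s, has_pdA d (d_alpha_s s f) p (a s)) ->
  has_pdA d (dbar_u v u f) p (dbarv v u a).
Proof.
move=> da; apply: (has_pdAD (da ord0)); apply: (has_pdA_linear -%R).
apply: (has_pdA_linear ((-1) ^+ u \*o idfun)); apply: has_pdA_sum => s _.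
exact: (has_pdA_linear (v s \*o idfun) (da s)).
Qed.

Lemma has_pdA_dbarT_u d e (F : stemfam A t0 tau) J p
    (a : 'I_t0.+1 -> A) (b : 'I_tau -> A) :
  (forall s, has_pdA d (d_alpha_s s (F J)) p (a s)) ->
  (forall h, has_pdA d (d_beta_h h (F (symdiff1 J h))) p (b h)) ->
  has_pdA d (dbarT_u e F J) p
    (dbarv v (#|J| + e) a + \sum_(h < tau) (-1) ^+ (sigma h J + e) *: b h).
Proof.
move=> da db; apply: (has_pdAD (has_pdA_dbar_u _ da)).
by apply: has_pdA_sum => h _; exact: (has_pdA_linear (_ \*: idfun) (db h)).
Qed.

End StemOperators.

Section StemLaplacian.
Variables (R : realType) (A : falgType R) (v : nat -> A) (t0 tau : nat).
Variables (D : set (pt R t0 tau)) (F : stemfam A t0 tau) (p : pt R t0 tau).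
Hypotheses (Dop : open D) (F2 : forall K, C2_onA D (F K)) (Dp : D p).

Lemma d_alpha_dbar_u j u K :
  d_alpha_s j (dbar_u v u (F K)) p =
  dbarv v u (fun i => d_alpha_s j (d_alpha_s i (F K)) p).
Proof.
apply/has_pdA_val/has_pdA_dbar_u => s.
exact: (has_pdA_C2 (inl s) (inl j) (F2 K) Dp).
Qed.

Lemma d_alpha_dbarT_u j e J :
  d_alpha_s j (dbarT_u v e F J) p =
  dbarv v (#|J| + e) (fun i => d_alpha_s j (d_alpha_s i (F J)) p) +
  \sum_(k < tau) (-1) ^+ (sigma k J + e) *:
    d_beta_h k (d_alpha_s j (F (symdiff1 J k))) p.
Proof.
apply/has_pdA_val/has_pdA_dbarT_u => [s|k].
  exact: (has_pdA_C2 (inl s) (inl j) (F2 J) Dp).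
have := has_pdA_C2 (inr k) (inl j) (F2 (symdiff1 J k)) Dp.
by rewrite (pdA_comm (inr k) (inl j) Dop (F2 _) Dp).
Qed.

Lemma d_beta_dbarT_u h e J :
  d_beta_h h (dbarT_u v e F J) p =
  dbarv v (#|J| + e) (fun i => d_beta_h h (d_alpha_s i (F J)) p) +
  \sum_(k < tau) (-1) ^+ (sigma k J + e) *:
    d_beta_h h (d_beta_h k (F (symdiff1 J k))) p.
Proof.
apply/has_pdA_val/has_pdA_dbarT_u => [s|k].
  exact: (has_pdA_C2 (inl s) (inr h) (F2 J) Dp).
exact: (has_pdA_C2 (inr k) (inr h) (F2 _) Dp).
Qed.

Lemma LapT_dbarT_u e e' K :
  odd (e + e') -> LapT v F K p = dbarT_u v e' (dbarT_u v e F) K p.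
Proof.
move=> ee'; rewrite dbarT_uE.
under eq_dbarv => j do rewrite d_alpha_dbarT_u.
under eq_bigr => h _ do rewrite d_beta_dbarT_u.
rewrite /LapT /d_alpha dbar_uE.
under eq_dbarv => j do rewrite d_alpha_dbar_u.
have Saa_sym s :
    d_alpha_s ord0 (d_alpha_s s (F K)) p = d_alpha_s s (d_alpha_s ord0 (F K)) p.
  exact: (pdA_comm (inl s) (inl ord0) Dop (F2 K) Dp).
have Sbb_sym J k h : d_beta_h h (d_beta_h k (F J)) p = d_beta_h k (d_beta_h h (F J)) p.
  exact: (pdA_comm (inr k) (inr h) Dop (F2 J) Dp).
rewrite dbarvD; under eq_bigr => h _ do rewrite scalerDr.
rewrite big_split /= [RHS]addrA -[in RHS](addrA (dbarv v (#|K| + e') _)).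
rewrite (mixed_terms_cancel v K ee' (fun J i h => d_beta_h h (d_alpha_s i (F J)) p)).
rewrite addr0 (beta_terms K ee' Sbb_sym).
have odd_KK : odd (#|K| + e + (#|K| + e')) by rewrite addnACA addnn oddD odd_double.
by rewrite (dbarv_comp v _ Saa_sym) // (dbarv_comp v odd_KK Saa_sym).
Qed.

End StemLaplacian.

Unset Implicit Arguments.
Theorem lemma3p5 (R : realType) (A : falgType R) (star : A -> A)
  (N : nat) (v : nat -> A) (tau t0 : nat) (t : 'I_tau.+1 -> nat)
  (D : set (pt R t0 tau)) (F : stemfam A t0 tau) :
  is_star_involution star ->
  clifford_basis N v ->
  T_sequence N t -> t ord0 = t0 ->
  open D -> flip_invariant D ->
  is_stem D F -> (forall K, C2_onA D (F K)) ->
  forall (K : {set 'I_tau}) (p : pt R t0 tau), D p ->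
    LapT v F K p = dT v (dbarT v F) K p /\
    LapT v F K p = dbarT v (dT v F) K p.
Proof.
move=> _ _ _ _ Dop _ _ F2 K p Dp.
rewrite (dT_dbarT_u v F) (dbarT_dbarT_u v F) (dT_dbarT_u v) (dbarT_dbarT_u v).
by split; apply: (LapT_dbarT_u v Dop F2 Dp).
Qed.
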